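(* Let $G$ be a graph on $[n]$ and $w\in\mathcal E_G$ nonzero. Then $L(w)$ and $R(w)$ are subgraphs of $G$, i.e. if $x_{ij}w=0$ or $wx_{ij}=0$ then $\{i,j\}$ is an edge of $G$.
   Context: Let $n\ge 1$. The Fomin–Kirillov algebra $\mathcal E_n$ is the associative $\mathbb Q$-algebra with generators $x_{ij}$ for ordered pairs of distinct $i,j\in[n]$, subject to $x_{ij}=-x_{ji}$, $x_{ij}^2=0$, $x_{ij}x_{kl}=x_{kl}x_{ij}$ for distinct $i,j,k,l$, and $x_{ij}x_{jk}+x_{jk}x_{ki}+x_{ki}x_{ij}=0$ for distinct $i,j,k$. For a simple graph $G$ on vertex set $[n]$, $\mathcal E_G$ is the subalgebra of $\mathcal E_n$ generated by the $x_{ij}$ with $\{i,j\}$ an edge of $G$. For $w\in\mathcal E_n$, the left descent set $L(w)$ is the graph on $[n]$ with an edge $\{i,j\}$ whenever $x_{ij}w=0$, and the right descent set $R(w)$ is the graph with an edge $\{i,j\}$ whenever $wx_{ij}=0$. *)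

(* The Fomin--Kirillov algebra E_n is presented as the free
   associative Q-algebra on letters x_ij (ordered pairs i <> j) modulo the
   two-sided ideal generated by the defining relations.  Elements of the free
   algebra are represented by formal sums (lists of (coefficient, word));
   two formal sums denote the same free-algebra element iff they have the
   same coefficient function [coef]. *)
From HB Require Import structures.
From mathcomp Require Import all_boot all_order all_algebra.
Set Implicit Arguments. Unset Strict Implicit. Unset Printing Implicit Defensive.
Import Order.TTheory GRing.Theory Num.Theory.
Local Open Scope ring_scope.

Definition letter (n : nat) := {p : 'I_n * 'I_n | p.1 != p.2}.
Definition word (n : nat) := seq (letter n).

Definition fpoly (n : nat) := seq (rat * word n).

Definition coef n (p : fpoly n) (u : word n) : rat :=
  \sum_(t <- p | t.2 == u) t.1.

Definition fadd n (p q : fpoly n) : fpoly n := p ++ q.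
Definition fscale n (c : rat) (p : fpoly n) : fpoly n :=
  [seq (c * t.1, t.2) | t <- p].
Definition fsub n (p q : fpoly n) : fpoly n := fadd p (fscale (-1) q).
Definition fmul n (p q : fpoly n) : fpoly n :=
  [seq (s.1 * t.1, s.2 ++ t.2) | s <- p, t <- q].

(* the generator x_ij (the empty sum if i = j, never used in that case) *)
Definition gen n (i j : 'I_n) : fpoly n :=
  match insub (i, j) : option (letter n) with
  | Some l => [:: (1, [:: l])]
  | None => [::]
  end.

Inductive FK_rel (n : nat) : fpoly n -> Prop :=
| FK_antisym (i j : 'I_n) : i != j -> FK_rel (fadd (gen i j) (gen j i))
| FK_square (i j : 'I_n) : i != j -> FK_rel (fmul (gen i j) (gen i j))
| FK_commute (i j k l : 'I_n) :
    [&& i != j, i != k, i != l, j != k, j != l & k != l] ->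
    FK_rel (fsub (fmul (gen i j) (gen k l)) (fmul (gen k l) (gen i j)))
| FK_three (i j k : 'I_n) :
    [&& i != j, i != k & j != k] ->
    FK_rel (fadd (fmul (gen i j) (gen j k))
             (fadd (fmul (gen j k) (gen k i)) (fmul (gen k i) (gen i j)))).

(* [FK_zero p] : p lies in the two-sided ideal generated by the relations,
   i.e. p represents 0 in E_n. *)
Inductive FK_zero (n : nat) : fpoly n -> Prop :=
| FKz_null (p : fpoly n) : (forall u, coef p u = 0) -> FK_zero p
| FKz_gen (a r b : fpoly n) : FK_rel r -> FK_zero (fmul a (fmul r b))
| FKz_add (p q : fpoly n) : FK_zero p -> FK_zero q -> FK_zero (fadd p q)
| FKz_ext (p q : fpoly n) :
    (forall u, coef p u = coef q u) -> FK_zero p -> FK_zero q.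

Definition FK_eq n (p q : fpoly n) : Prop := FK_zero (fsub p q).

Definition simple_graph n (G : rel 'I_n) : Prop :=
  symmetric G /\ irreflexive G.

(* w represents an element of the subalgebra E_G generated by the x_ij,
   {i,j} an edge of G *)
Definition in_EG n (G : rel 'I_n) (w : fpoly n) : Prop :=
  exists q : fpoly n,
    (forall t, t \in q -> all (fun l : letter n => G (val l).1 (val l).2) t.2)
    /\ FK_eq w q.

Definition left_descent n (w : fpoly n) (i j : 'I_n) : Prop :=
  i <> j /\ FK_zero (fmul (gen i j) w).
Definition right_descent n (w : fpoly n) (i j : 'I_n) : Prop :=
  i <> j /\ FK_zero (fmul w (gen i j)).

From mathcomp Require Import all_boot all_order all_algebra.
From mathcomp Require Import ring.
Set Implicit Arguments. Unset Strict Implicit. Unset Printing Implicit Defensive.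
Import Order.TTheory GRing.Theory Num.Theory.
Local Open Scope ring_scope.

(* Proof idea (braided derivations).  Fix a != b and let s be the
   automorphism of E_n permuting indices by the transposition (a b).  The
   twisted derivation D = D_ab is the linear map determined by
     D (x_ij) = +1 if (i,j) = (a,b),  -1 if (i,j) = (b,a),  0 otherwise,
     D (u v)  = D(u) v + s(u) D(v).
   Both s and D preserve the ideal of relations, hence are well defined on
   E_n.  If {a,b} is not an edge of G then D kills every generator of E_G,
   so D(w) = 0 for w in E_G.  Now
     x_ab w = 0  ==>  0 = D(x_ab w) = w + s(x_ab) D(w) = w,
     w x_ab = 0  ==>  0 = D(w x_ab) = D(w) x_ab + s(w) = s(w)  ==>  w = 0. *)

Section Pairing.
Variable n : nat.
Implicit Types p q : fpoly n.

Definition sumf p (f : word n -> rat) : rat := \sum_(t <- p) t.1 * f t.2.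

Definition ceq p q := forall u, coef p u = coef q u.

Lemma sumf_nil f : sumf [::] f = 0. Proof. by rewrite /sumf big_nil. Qed.

Lemma sumf_cons t p f : sumf (t :: p) f = t.1 * f t.2 + sumf p f.
Proof. by rewrite /sumf big_cons. Qed.

Lemma sumf_fadd p q f : sumf (fadd p q) f = sumf p f + sumf q f.
Proof. by rewrite /sumf big_cat. Qed.

Lemma sumf_map (h : word n -> word n) p f :
  sumf [seq (t.1, h t.2) | t <- p] f = sumf p (fun v => f (h v)).
Proof. by rewrite /sumf big_map. Qed.

Lemma sumf_scale c p f : sumf (fscale c p) f = c * sumf p f.
Proof. rewrite /sumf big_map big_distrr; apply: eq_bigr => t _ /=; ring. Qed.

Lemma sumf_fsub p q f : sumf (fsub p q) f = sumf p f - sumf q f.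
Proof. rewrite sumf_fadd sumf_scale; ring. Qed.

Lemma sumf_mul p q f :
  sumf (fmul p q) f = sumf p (fun v => sumf q (fun w => f (v ++ w))).
Proof.
rewrite /sumf /fmul big_allpairs_dep; apply: eq_bigr => s _ /=.
rewrite big_distrr; apply: eq_bigr => t _ /=; ring.
Qed.

Lemma sumf_eq p f g : f =1 g -> sumf p f = sumf p g.
Proof. by move=> e; apply: eq_bigr => t _; rewrite e. Qed.

Lemma sumf_add p f g : sumf p (fun v => f v + g v) = sumf p f + sumf p g.
Proof. rewrite /sumf -big_split; apply: eq_bigr => t _ /=; ring. Qed.

Lemma sumf_sc p c f : sumf p (fun v => c * f v) = c * sumf p f.
Proof. rewrite /sumf big_distrr; apply: eq_bigr => t _ /=; ring. Qed.

Lemma sumf_0 p : sumf p (fun _ => 0) = 0.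
Proof. rewrite /sumf big1 // => t _; ring. Qed.

Lemma sumf_exch p q (F : word n -> word n -> rat) :
  sumf p (fun v => sumf q (fun w => F v w)) =
  sumf q (fun w => sumf p (fun v => F v w)).
Proof.
rewrite /sumf.
transitivity (\sum_(s <- p) \sum_(t <- q) s.1 * t.1 * F s.2 t.2).
  by apply: eq_bigr => s _; rewrite big_distrr; apply: eq_bigr => t _ /=; ring.
rewrite exchange_big; apply: eq_bigr => t _; rewrite big_distrr.
by apply: eq_bigr => s _ /=; ring.
Qed.

Lemma sumf_in p f : (forall t, t \in p -> f t.2 = 0) -> sumf p f = 0.
Proof. by move=> H; rewrite /sumf big_seq big1 // => t tp; rewrite H ?mulr0. Qed.

Lemma coef_sumf p u : coef p u = sumf p (fun v => (v == u)%:R).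
Proof.
rewrite /coef /sumf big_mkcond; apply: eq_bigr => t _ /=.
by case: (t.2 == u); rewrite ?mulr1 ?mulr0.
Qed.

Lemma sumf_coefV (V : seq (word n)) p f :
  uniq V -> (forall t, t \in p -> t.2 \in V) ->
  sumf p f = \sum_(v <- V) coef p v * f v.
Proof.
move=> uV sub.
transitivity (\sum_(v <- V) \sum_(t <- p) (if t.2 == v then t.1 * f t.2 else 0)).
  rewrite exchange_big /sumf big_seq_cond [RHS]big_seq_cond.
  apply: eq_bigr => t /andP[tp _].
  rewrite -big_mkcond /= -big_filter.
  have -> : [seq v <- V | t.2 == v] = [:: t.2].
    rewrite -(filter_pred1_uniq uV (sub t tp)).
    by apply: eq_filter => v; rewrite /= eq_sym.
  by rewrite big_seq1.
apply: eq_bigr => v _; rewrite /coef big_distrl /= [RHS]big_mkcond.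
by apply: eq_bigr => t _; case: (t.2 =P v) => [->|].
Qed.

Lemma sumf_ceq p q f : ceq p q -> sumf p f = sumf q f.
Proof.
move=> e.
have uV := undup_uniq [seq t.2 | t <- p ++ q].
rewrite (sumf_coefV f uV) ?(sumf_coefV f uV) //.
- by apply: eq_bigr => v _; rewrite e.
- by move=> t tq; rewrite mem_undup; apply/mapP; exists t; rewrite // mem_cat tq orbT.
- by move=> t tp; rewrite mem_undup; apply/mapP; exists t; rewrite // mem_cat tp.
Qed.

Lemma null_sumf p f : (forall u, coef p u = 0) -> sumf p f = 0.
Proof.
move=> e; rewrite (@sumf_ceq p [::]) ?sumf_nil // => u.
by rewrite e /coef big_nil.
Qed.
End Pairing.

Section IdealClosure.
Variable n : nat.
Implicit Types p q r a b c : fpoly n.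

Lemma FK_zero_ext p q : (forall f, sumf p f = sumf q f) -> FK_zero p -> FK_zero q.
Proof. by move=> e; apply: FKz_ext => u; rewrite !coef_sumf e. Qed.

Lemma FK_zero_null p : (forall f, sumf p f = 0) -> FK_zero p.
Proof. by move=> e; apply: FKz_null => u; rewrite coef_sumf e. Qed.

Lemma FK_mulL c p : FK_zero p -> FK_zero (fmul c p).
Proof.
elim=> {p} [p e|a r b Hr|p q _ Hp _ Hq|p q e _ H].
- apply: FK_zero_null => f; rewrite sumf_mul.
  by under sumf_eq => v do rewrite (null_sumf _ e); rewrite sumf_0.
- apply: (@FK_zero_ext (fmul (fmul c a) (fmul r b))); last exact: FKz_gen.
  move=> f; rewrite !sumf_mul; apply: sumf_eq => v; rewrite sumf_mul.
  by apply: sumf_eq => w; apply: sumf_eq => x; rewrite catA.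
- apply: (@FK_zero_ext (fadd (fmul c p) (fmul c q))); last exact: FKz_add.
  move=> f; rewrite sumf_fadd !sumf_mul -sumf_add.
  by apply: sumf_eq => v; rewrite sumf_fadd.
- by apply: FK_zero_ext H => f; rewrite !sumf_mul; apply: sumf_eq => v; apply: sumf_ceq.
Qed.

Lemma FK_mulR c p : FK_zero p -> FK_zero (fmul p c).
Proof.
elim=> {p} [p e|a r b Hr|p q _ Hp _ Hq|p q e _ H].
- by apply: FK_zero_null => f; rewrite sumf_mul (null_sumf _ e).
- apply: (@FK_zero_ext (fmul a (fmul r (fmul b c)))); last exact: FKz_gen.
  move=> f; rewrite !sumf_mul; apply: sumf_eq => v.
  do 3?[rewrite ?sumf_mul; apply: sumf_eq => ?]; by rewrite ?sumf_mul ?catA.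
- apply: (@FK_zero_ext (fadd (fmul p c) (fmul q c))); last exact: FKz_add.
  by move=> f; rewrite sumf_fadd !sumf_mul sumf_fadd.
- by apply: FK_zero_ext H => f; rewrite !sumf_mul; apply: sumf_ceq.
Qed.

Lemma sumf_const k (f : word n -> rat) : sumf [:: (k, [::] : word n)] f = k * f [::].
Proof. by rewrite sumf_cons sumf_nil addr0. Qed.

Lemma FK_scale k p : FK_zero p -> FK_zero (fscale k p).
Proof.
move=> H; apply: (@FK_zero_ext (fmul [:: (k, [::])] p)); last exact: FK_mulL.
by move=> f; rewrite sumf_mul sumf_const sumf_scale.
Qed.

Lemma FK_sub p q : FK_zero p -> FK_zero q -> FK_zero (fsub p q).
Proof. by move=> Hp Hq; apply: FKz_add => //; apply: FK_scale. Qed.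

Lemma FK_relZ k r : FK_rel r -> FK_zero (fscale k r).
Proof.
move=> H; apply: (FK_zero_ext _ (FKz_gen [:: (k, [::])] [:: (1, [::])] H)).
move=> f; rewrite sumf_mul sumf_const sumf_scale; congr (_ * _).
by rewrite sumf_mul; apply: sumf_eq => v; rewrite sumf_const mul1r cats0.
Qed.
End IdealClosure.
Arguments FK_zero_ext {n p q}.

Section TwistedDerivation.
Variable n : nat.
Variables a b : 'I_n.
Hypothesis hab : a != b.
Implicit Types p q r : fpoly n.

Definition sw (x : 'I_n) : 'I_n := if x == a then b else if x == b then a else x.

Lemma sw_a : sw a = b. Proof. by rewrite /sw eqxx. Qed.
Lemma sw_b : sw b = a. Proof. by rewrite /sw eq_sym (negbTE hab) eqxx. Qed.
Lemma sw_o x : x != a -> x != b -> sw x = x.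
Proof. by move=> xa xb; rewrite /sw (negbTE xa) (negbTE xb). Qed.

Lemma swK : involutive sw.
Proof.
move=> x; case: (eqVneq x a) => [->|xa]; first by rewrite sw_a sw_b.
case: (eqVneq x b) => [->|xb]; first by rewrite sw_b sw_a.
by rewrite !sw_o.
Qed.

Lemma sw_eq x y : (sw x == sw y) = (x == y).
Proof. by apply/eqP/eqP => [/(inv_inj swK)|->]. Qed.

Definition sl (l : letter n) : letter n :=
  odflt l (insub (sw (val l).1, sw (val l).2)).

Lemma sl_val l : val (sl l) = (sw (val l).1, sw (val l).2).
Proof. by rewrite /sl; case: insubP => [u _ -> //|] /=; rewrite sw_eq (valP l). Qed.

Lemma slK : involutive sl.
Proof. by move=> l; apply: val_inj; rewrite !sl_val /= !swK; case: (val l). Qed.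

(* The value of D on generators: +1 on x_ab, -1 on x_ba, 0 otherwise. *)
Definition eps (x y : 'I_n) : rat :=
  if (x == a) && (y == b) then 1 else if (x == b) && (y == a) then -1 else 0.
Definition epsl (l : letter n) := eps (val l).1 (val l).2.

Lemma not_ab x : ~~ ((x == a) && (x == b)).
Proof. by apply/andP => [[/eqP -> ]]; rewrite (negbTE hab). Qed.

Lemma eps_ab : eps a b = 1. Proof. by rewrite /eps !eqxx. Qed.

Lemma eps_diag x : eps x x = 0.
Proof. by have := not_ab x; rewrite /eps; case: (x == a); case: (x == b). Qed.

Lemma eps_anti x y : eps y x = - eps x y.
Proof.
have := not_ab x; have := not_ab y.
rewrite /eps; case: (x == a); case: (x == b); case: (y == a); case: (y == b) => //= _ _;
  by rewrite ?oppr0 ?opprK.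
Qed.

Lemma eps_cases x y : eps x y != 0 -> ((x == a) && (y == b)) || ((x == b) && (y == a)).
Proof. by rewrite /eps; case: ((x == a) && (y == b)); case: ((x == b) && (y == a)). Qed.

Lemma eps_nz x y : eps x y != 0 ->
  [/\ sw x = y, sw y = x & forall k, k != x -> k != y -> sw k = k].
Proof.
have := not_ab x; have := not_ab y.
rewrite /eps; case xa: (x == a); case xb: (x == b); case ya: (y == a); case yb: (y == b);
  rewrite //= ?eqxx //= => _ _ _.
- move/eqP: xa => ->; move/eqP: yb => ->.
  by split; rewrite ?sw_a ?sw_b // => k; exact: sw_o.
- move/eqP: xb => ->; move/eqP: ya => ->.
  by split; rewrite ?sw_a ?sw_b // => k kb ka; exact: sw_o.
Qed.

(* D on a word l_1 ... l_m: sum over k of eps(l_k) s(l_1 ... l_(k-1)) l_(k+1) ... l_m. *)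
Fixpoint Dw (u : word n) : fpoly n :=
  if u is l :: u' then (epsl l, u') :: [seq (t.1, sl l :: t.2) | t <- Dw u'] else [::].

Definition D p : fpoly n := flatten [seq fscale t.1 (Dw t.2) | t <- p].
Definition S p : fpoly n := [seq (t.1, map sl t.2) | t <- p].

Lemma sumf_D p f : sumf (D p) f = sumf p (fun v => sumf (Dw v) f).
Proof.
rewrite /D /sumf big_flatten /= big_map; apply: eq_bigr => t _.
by rewrite -/(sumf _ _) sumf_scale.
Qed.

Lemma sumf_S p f : sumf (S p) f = sumf p (fun v => f (map sl v)).
Proof. exact: sumf_map. Qed.

Lemma sumf_Dw_cat v w f : sumf (Dw (v ++ w)) f =
  sumf (Dw v) (fun x => f (x ++ w)) + sumf (Dw w) (fun x => f (map sl v ++ x)).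
Proof.
elim: v f => [|l v IH] f /=; first by rewrite sumf_nil add0r.
rewrite sumf_cons sumf_map IH sumf_cons sumf_map /=; ring.
Qed.

Lemma sumf_Dmul p q f : sumf (D (fmul p q)) f =
  sumf (D p) (fun v => sumf q (fun w => f (v ++ w))) +
  sumf (S p) (fun v => sumf (D q) (fun w => f (v ++ w))).
Proof.
rewrite sumf_D sumf_mul sumf_D sumf_S -sumf_add; apply: sumf_eq => v.
rewrite sumf_D; under sumf_eq => w do rewrite sumf_Dw_cat.
by rewrite sumf_add sumf_exch.
Qed.

Lemma sumf_Smul p q f :
  sumf (S (fmul p q)) f = sumf (S p) (fun v => sumf (S q) (fun w => f (v ++ w))).
Proof.
rewrite sumf_S sumf_mul sumf_S; apply: sumf_eq => v; rewrite sumf_S.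
by apply: sumf_eq => w; rewrite map_cat.
Qed.

Lemma sumf_Dadd p q f : sumf (D (fadd p q)) f = sumf (D p) f + sumf (D q) f.
Proof. by rewrite !sumf_D sumf_fadd. Qed.

Lemma sumf_Dsub p q f : sumf (D (fsub p q)) f = sumf (D p) f - sumf (D q) f.
Proof. by rewrite sumf_Dadd !sumf_D sumf_scale mulN1r. Qed.

Lemma sumf_Sadd p q f : sumf (S (fadd p q)) f = sumf (S p) f + sumf (S q) f.
Proof. by rewrite !sumf_S sumf_fadd. Qed.

Lemma sumf_Sscale c p f : sumf (S (fscale c p)) f = c * sumf (S p) f.
Proof. by rewrite !sumf_S sumf_scale. Qed.

Lemma sumf_gen (i j : 'I_n) f :
  sumf (gen i j) f = if insub (i, j) is Some l then f [:: l] else 0.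
Proof. by rewrite /gen; case: insub => [l|]; rewrite ?sumf_cons sumf_nil ?addr0 ?mul1r. Qed.

Lemma sumf_Sgen (i j : 'I_n) f : sumf (S (gen i j)) f = sumf (gen (sw i) (sw j)) f.
Proof.
rewrite sumf_S !sumf_gen.
case: insubP => [l ij vl|ij]; case: insubP => [l' ij' vl'|ij'] //=.
- by congr (f [:: _]); apply: val_inj; rewrite sl_val vl vl'.
- by move: ij'; rewrite /= sw_eq ij.
- by move: ij'; rewrite /= sw_eq (negbTE ij).
Qed.

Lemma sumf_Dgen (i j : 'I_n) f : sumf (D (gen i j)) f = eps i j * f [::].
Proof.
rewrite sumf_D sumf_gen; case: insubP => [l ij vl|ij] /=.
  by rewrite sumf_cons sumf_nil addr0 /epsl vl.
by move: ij; rewrite /= negbK => /eqP ->; rewrite eps_diag mul0r.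
Qed.

Lemma sumf_Smul2 (i j k l : 'I_n) f :
  sumf (S (fmul (gen i j) (gen k l))) f =
  sumf (fmul (gen (sw i) (sw j)) (gen (sw k) (sw l))) f.
Proof. rewrite sumf_Smul sumf_Sgen sumf_mul; apply: sumf_eq => v; exact: sumf_Sgen. Qed.

Lemma sumf_Dmul2 (i j k l : 'I_n) f :
  sumf (D (fmul (gen i j) (gen k l))) f =
  eps i j * sumf (gen k l) f + eps k l * sumf (gen (sw i) (sw j)) f.
Proof.
rewrite sumf_Dmul sumf_Dgen /= sumf_Sgen; congr (_ + _).
under sumf_eq => v do rewrite sumf_Dgen cats0.
by rewrite sumf_sc.
Qed.

(* The degree-one pieces of D(relation): multiples of x_xy + x_yx ... *)
Lemma antisym_multiple (e : rat) (x y x' y' : 'I_n) :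
  (e != 0 -> [/\ x != y, x' = y & y' = x]) ->
  FK_zero (fscale e (fadd (gen x y) (gen x' y'))).
Proof.
move=> H; case: (eqVneq e 0) => [->|ne].
  by apply: FK_zero_null => f; rewrite sumf_scale mul0r.
by case: (H ne) => xy -> ->; apply: FK_relZ; exact: FK_antisym.
Qed.

(* ... and multiples of x_xy - x_xy. *)
Lemma trivial_multiple (e : rat) (x y x' y' : 'I_n) :
  (e != 0 -> x' = x /\ y' = y) ->
  FK_zero (fscale e (fsub (gen x y) (gen x' y'))).
Proof.
move=> H; case: (eqVneq e 0) => [->|ne].
  by apply: FK_zero_null => f; rewrite sumf_scale mul0r.
case: (H ne) => -> ->; apply: FK_zero_null => f.
by rewrite sumf_scale sumf_fsub subrr mulr0.
Qed.

Lemma D_rel r : FK_rel r -> FK_zero (D r).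
Proof.
case=> [i j ij|i j ij|i j k l H|i j k H].
- by apply: FK_zero_null => f; rewrite sumf_Dadd !sumf_Dgen eps_anti; ring.
- apply: (FK_zero_ext _ (@antisym_multiple (eps i j) i j (sw i) (sw j) _)).
    by move=> f; rewrite sumf_Dmul2 sumf_scale sumf_fadd; ring.
  by move=> /eps_nz [-> -> _]; split.
- case/and5P: H => ij ik il jk /andP[jl kl].
  apply: (FK_zero_ext _ (FKz_add (@trivial_multiple (eps i j) k l (sw k) (sw l) _)
                               (@trivial_multiple (eps k l) (sw i) (sw j) i j _))).
  + move=> f; rewrite sumf_fadd !sumf_scale !sumf_fsub sumf_Dsub !sumf_Dmul2; ring.
  + by move=> /eps_nz [_ _ H]; rewrite !H // eq_sym.
  + by move=> /eps_nz [_ _ H]; rewrite !H.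
- case/and3P: H => ij ik jk.
  apply: (FK_zero_ext _ (FKz_add (@antisym_multiple (eps i j) j k (sw k) (sw i) _)
             (FKz_add (@antisym_multiple (eps j k) k i (sw i) (sw j) _)
                      (@antisym_multiple (eps k i) i j (sw j) (sw k) _)))).
  + move=> f; rewrite !sumf_fadd !sumf_scale !sumf_fadd !sumf_Dadd !sumf_Dmul2; ring.
  + by move=> /eps_nz [-> _ H]; rewrite H // eq_sym.
  + by move=> /eps_nz [-> _ H]; rewrite H // eq_sym.
  + by move=> /eps_nz [-> _ H]; rewrite H // eq_sym.
Qed.

Lemma S_rel r : FK_rel r -> exists2 r', FK_rel r' & forall f, sumf (S r) f = sumf r' f.
Proof.
case=> [i j ij|i j ij|i j k l H|i j k H].
- exists (fadd (gen (sw i) (sw j)) (gen (sw j) (sw i))).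
    by apply: FK_antisym; rewrite sw_eq.
  by move=> f; rewrite sumf_Sadd !sumf_Sgen sumf_fadd.
- exists (fmul (gen (sw i) (sw j)) (gen (sw i) (sw j))).
    by apply: FK_square; rewrite sw_eq.
  by move=> f; rewrite sumf_Smul2.
- exists (fsub (fmul (gen (sw i) (sw j)) (gen (sw k) (sw l)))
               (fmul (gen (sw k) (sw l)) (gen (sw i) (sw j)))).
    by apply: FK_commute; rewrite !sw_eq.
  by move=> f; rewrite /fsub sumf_Sadd sumf_Sscale !sumf_Smul2 sumf_fadd sumf_scale.
- exists (fadd (fmul (gen (sw i) (sw j)) (gen (sw j) (sw k)))
             (fadd (fmul (gen (sw j) (sw k)) (gen (sw k) (sw i)))
                   (fmul (gen (sw k) (sw i)) (gen (sw i) (sw j))))).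
    by apply: FK_three; rewrite !sw_eq.
  by move=> f; rewrite !sumf_Sadd !sumf_Smul2 !sumf_fadd.
Qed.

Lemma S_zero p : FK_zero p -> FK_zero (S p).
Proof.
elim=> {p} [p e|a' r b' Hr|p q _ Hp _ Hq|p q e _ H].
- by apply: FK_zero_null => f; rewrite sumf_S (null_sumf _ e).
- have [r' Hr' er] := S_rel Hr.
  apply: (FK_zero_ext _ (FKz_gen (S a') (S b') Hr')) => f.
  rewrite sumf_Smul sumf_mul; apply: sumf_eq => v.
  by rewrite sumf_Smul sumf_mul er.
- by apply: FK_zero_ext (FKz_add Hp Hq) => f; rewrite sumf_Sadd sumf_fadd.
- by apply: FK_zero_ext H => f; rewrite !sumf_S; apply: sumf_ceq.
Qed.

(* s is an involution, so it reflects zero as well. *)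
Lemma S_zero_inv p : FK_zero (S p) -> FK_zero p.
Proof.
move/S_zero; apply: FK_zero_ext => f.
by rewrite !sumf_S; apply: sumf_eq => v; rewrite (mapK slK).
Qed.

(* D is well defined on E_n: by the Leibniz rule, D(a r b) lies in the ideal. *)
Lemma D_zero p : FK_zero p -> FK_zero (D p).
Proof.
elim=> {p} [p e|a' r b' Hr|p q _ Hp _ Hq|p q e _ H].
- by apply: FK_zero_null => f; rewrite sumf_D (null_sumf _ e).
- have [r' Hr' er] := S_rel Hr.
  have H1 : FK_zero (fmul (D a') (fmul r b')) by exact: FKz_gen.
  have H2 : FK_zero (fmul (D r) b') by apply: FK_mulR; exact: D_rel.
  have H3 : FK_zero (fmul (S r) (D b')).
    apply: (FK_zero_ext _ (FKz_gen [:: (1, [::])] (D b') Hr')) => f.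
    by rewrite sumf_mul sumf_const mul1r /= !sumf_mul er.
  apply: (FK_zero_ext _ (FKz_add H1 (FK_mulL (S a') (FKz_add H2 H3)))) => f.
  rewrite sumf_fadd sumf_Dmul; congr (_ + _); first by rewrite sumf_mul.
  rewrite sumf_mul; apply: sumf_eq => v.
  by rewrite sumf_fadd sumf_Dmul !sumf_mul.
- by apply: FK_zero_ext (FKz_add Hp Hq) => f; rewrite sumf_Dadd sumf_fadd.
- by apply: FK_zero_ext H => f; rewrite !sumf_D; apply: sumf_ceq.
Qed.

Lemma Dw_zero (u : word n) :
  all (fun l => epsl l == 0) u -> forall f, sumf (Dw u) f = 0.
Proof.
elim: u => [|l u IH] /= H f; first by rewrite sumf_nil.
case/andP: H => /eqP e H.
by rewrite sumf_cons sumf_map e mul0r IH ?add0r.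
Qed.

Lemma D_EG (G : rel 'I_n) w :
  symmetric G -> ~~ G a b -> in_EG G w -> FK_zero (D w).
Proof.
move=> Gsym nG [q [Hq Hwq]].
have Dq f : sumf (D q) f = 0.
  rewrite sumf_D; apply: sumf_in => t tq; apply: Dw_zero.
  apply/allP => l /(allP (Hq t tq)) Gl.
  apply: (contraNT _ nG) => /eps_cases /orP[] /andP[/eqP h1 /eqP h2];
    by move: Gl; rewrite h1 h2 // Gsym.
by apply: FK_zero_ext (D_zero Hwq) => f; rewrite sumf_Dsub Dq subr0.
Qed.

(* If D(w) = 0 and x_ab w = 0 then w = D(x_ab w) - s(x_ab) D(w) = 0. *)
Lemma left_annihilated_zero w :
  FK_zero (D w) -> FK_zero (fmul (gen a b) w) -> FK_zero w.
Proof.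
move=> Dw0 Hz.
apply: FK_zero_ext (FK_sub (D_zero Hz) (FK_mulL (S (gen a b)) Dw0)) => f.
rewrite sumf_fsub sumf_Dmul sumf_Dgen eps_ab mul1r /= [X in _ - X]sumf_mul addrK.
exact: sumf_eq.
Qed.

(* If D(w) = 0 and w x_ab = 0 then s(w) = D(w x_ab) - D(w) x_ab = 0. *)
Lemma right_annihilated_zero w :
  FK_zero (D w) -> FK_zero (fmul w (gen a b)) -> FK_zero w.
Proof.
move=> Dw0 Hz; apply: S_zero_inv.
apply: FK_zero_ext (FK_sub (D_zero Hz) (FK_mulR (gen a b) Dw0)) => f.
rewrite sumf_fsub sumf_Dmul [X in _ - X]sumf_mul addrAC subrr add0r.
by apply: sumf_eq => v; rewrite sumf_Dgen eps_ab mul1r cats0.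
Qed.
End TwistedDerivation.

Theorem mainTheorem10 (n : nat) (Hn : (0 < n)%N) (G : rel 'I_n)
  (HG : simple_graph G) (w : fpoly n) :
  in_EG G w -> ~ FK_zero w ->
  forall i j : 'I_n,
    (left_descent w i j -> G i j) /\ (right_descent w i j -> G i j).
Proof.
case: HG => Gsym _ wG nw i j.
split=> -[/eqP ij Hz]; apply/negPn/negP => nG; apply: nw.
- exact: (left_annihilated_zero ij (D_EG ij Gsym nG wG) Hz).
- exact: (right_annihilated_zero ij (D_EG ij Gsym nG wG) Hz).
Qed.
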